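(* Let $X=[0,1]$ with the Euclidean metric, $T(x)=2x \bmod 1$, and $\mu$ Lebesgue measure. Let $(r_n)_n$ be a sequence of positive numbers with $n^2r_n\to0$. Then $(\mu\times\mu)(\liminf_n E_{n,r_n}^T)=0$.
   Context: For $n\in\mathbb{N}$ and $r>0$, $E_{n,r}^{T}:=\{(x,y)\in X\times X : |T^i x- T^j y|<r \text{ for some } 0\le i,j<n\}$; $E_{n,r_n}^T$ is this set with $r=r_n$. *)

From HB Require Import structures.
From mathcomp Require Import all_boot all_order all_algebra.
From mathcomp Require Import all_classical all_reals all_analysis.
Set Implicit Arguments. Unset Strict Implicit. Unset Printing Implicit Defensive.
Import Order.TTheory GRing.Theory Num.Theory.
Local Open Scope classical_set_scope.
Local Open Scope ring_scope.

Definition doubling {R : realType} (x : R) : R := 2 * x - (Num.floor (2 * x))%:~R.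

(* E_{n,r}^T as a subset of X x X, with X = [0,1] viewed inside R * R *)
Definition Eset {R : realType} (T : R -> R) (n : nat) (r : R) : set (R * R) :=
  [set p | p.1 \in `[0, 1] /\ p.2 \in `[0, 1] /\
     exists i j : nat, (i < n)%N /\ (j < n)%N /\
       `|iter i T p.1 - iter j T p.2| < r].

Definition set_liminf {U : Type} (E : nat -> set U) : set U :=
  \bigcup_(N in [set: nat]) \bigcap_(n in [set k | (N <= k)%N]) E n.

From HB Require Import structures.
From mathcomp Require Import all_boot all_order all_algebra.
From mathcomp Require Import all_classical all_reals all_analysis.
From mathcomp Require Import ring lra zify.
Import Order.TTheory GRing.Theory Num.Theory numFieldNormedType.Exports.
Local Open Scope classical_set_scope.
Local Open Scope ring_scope.

(** If [|T^i x - T^j y| < r] with [y] in [[0, 1]], then [T^j y = 2^j y - k] for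
an integer [k] with [-1 <= k <= 2^j], so [y] lies within [r / 2^j] of one of the
[2^j + 2] points [(T^i x + t - 1) / 2^j]. Hence for every [x] the [x]-section of
[E_{n,r}] has Lebesgue (outer) measure at most [6 n^2 r]. The [x]-section of the
liminf is a countable union over [N] of sets contained in the sections of
[E_{n,r_n}] for all [n >= N], so it is null when [n^2 r_n -> 0], and integrating
over [x] gives product measure [0]. *)

Section outer_measure_null.
Context {T : Type} {R : realType} (mu : {outer_measure set T -> \bar R}).
Local Open Scope ereal_scope.

Lemma outer_measure_bigcup_ord_le n (F : nat -> set T) (b : R) :
  (forall i, (i < n)%N -> mu (F i) <= b%:E) ->
  mu (\bigcup_(i < n) F i) <= (n%:R * b)%:E.
Proof.
move=> Fb; rewrite bigcup_mkord; apply: (le_trans (outer_measure_subadditive mu F n)).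
apply: (@le_trans _ _ (\sum_(i < n) b%:E)); first by apply: lee_sum => i _; apply: Fb.
by rewrite sumEFin sumr_const card_ord mulr_natl.
Qed.

Lemma outer_measure_bigcup_null (F : nat -> set T) :
  (forall n, mu (F n) = 0%E) -> mu (\bigcup_n F n) = 0%E.
Proof.
move=> F0; apply/eqP; rewrite eq_le outer_measure_ge0 andbT.
by apply: (le_trans (outer_measure_sigma_subadditive mu F)); rewrite eseries0.
Qed.

Lemma outer_measurr_div_le_cvg0 (A : set T) (u : R^nat) :
  u @ \oo --> 0%R -> (\forall n \near \oo, mu A <= (u n)%:E) -> mu A = 0%E.
Proof.
move=> u0 Au; apply/eqP; rewrite eq_le outer_measure_ge0 andbT.
have [N _ AuN] := Au.
have fA : mu A \is a fin_num.
  rewrite ge0_fin_numE ?outer_measure_ge0//.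
  by apply: (le_lt_trans (AuN N _)); rewrite /= ?ltry.
rewrite -(fineK fA) lee_fin -(cvg_lim _ u0)//; apply: limr_ge; first by apply/cvg_ex; exists 0%R.
near=> n; rewrite -lee_fin fineK//; near: n; exact: Au.
Unshelve. all: by end_near.
Qed.

Lemma outer_measure_liminf_null (E : nat -> set T) (u : R^nat) :
  u @ \oo --> 0%R -> (forall n, mu (E n) <= (u n)%:E) -> mu (set_liminf E) = 0%E.
Proof.
move=> u0 Eu; apply: outer_measure_bigcup_null => N.
apply: (outer_measurr_div_le_cvg0 _ _ u0); exists N => // n /= Nn.
by apply: le_trans (Eu n); apply: le_outer_measure => y; apply.
Qed.

End outer_measure_null.

Lemma xsection_liminf (T1 T2 : Type) (E : nat -> set (T1 * T2)) x :
  xsection (set_liminf E) x = set_liminf (fun n => xsection (E n) x).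
Proof.
apply/seteqP; split => y; rewrite /xsection /= in_setE => -[N _ EN];
  by exists N => // n /EN; rewrite /= ?in_setE.
Qed.

Section doubling_map.
Context (R : realType).
Local Notation T := (@doubling R).

Lemma doubling_ge0_lt1 (z : R) : 0 <= T z < 1.
Proof.
rewrite /doubling; have /andP[h1 h2] := floor_itv (2 * z).
rewrite intrD in h2; apply/andP; split; lra.
Qed.

Lemma iter_doubling_itv j (y : R) : 0 <= y <= 1 -> 0 <= iter j T y <= 1.
Proof.
case: j => [//|j] _; rewrite iterS.
by have /andP[h1 h2] := doubling_ge0_lt1 (iter j T y); rewrite h1 ltW.
Qed.

Lemma iter_doublingE j (y : R) : exists k : int, iter j T y = 2 ^+ j * y - k%:~R.
Proof.
elim: j => [|j [k IH]]; first by exists 0; rewrite expr0 mul1r subr0.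
exists (k + k + Num.floor (2 * iter j T y)).
rewrite iterS /doubling !intrD IH exprS; lra.
Qed.

Lemma iter_doubling_near j (y a r : R) : 0 <= y <= 1 -> `|a - iter j T y| < r ->
  exists2 t, (t < 2 ^ j + 2)%N & ball ((a + t%:R - 1) / 2 ^+ j) (r / 2 ^+ j) y.
Proof.
move=> hy ar; have [k hk] := iter_doublingE j y.
have /andP[Tj_ge0 Tj_le1] := iter_doubling_itv j y hy.
have pow2_gt0 : 0 < (2 : R) ^+ j by apply: exprn_gt0.
have k_gt : (-2 < k)%R.
  by rewrite -(ltr_int R) rmorphN /= rmorph_nat; move: hy => /andP[? ?]; nra.
have tE : ((absz (k + 1)%R)%:R : R) = k%:~R + 1.
  by rewrite natr_absz ger0_norm ?intrD //; lia.
exists (absz (k + 1)%R).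
  by rewrite -(ltr_nat R) tE natrD natrX; move: hy => /andP[? ?]; nra.
rewrite /ball /=.
have -> : (a + (absz (k + 1)%R)%:R - 1) / 2 ^+ j - y = (a - iter j T y) / 2 ^+ j.
  by rewrite tE hk; field; rewrite gt_eqF.
by rewrite normrM [`|_^-1|]gtr0_norm ?invr_gt0 // ltr_pM2r ?invr_gt0.
Qed.

End doubling_map.

Section lebesgue_doubling.
Context (R : realType).
Local Notation lam := (@lebesgue_measure R).
(* On arbitrary (possibly non-measurable) sets, [lebesgue_measure] is the outer
   measure [mu_ext (wlength idfun)]; the generic lemmas are applied to the latter. *)
Local Notation lam_outer := (mu_ext (wlength (R:=R) idfun)).

Lemma lebesgue_xsection_Eset_doubling_le n (r x : R) : 0 < r ->
  (lam (xsection (Eset doubling n r) x) <= (6 * (n%:R ^+ 2 * r))%:E)%E.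
Proof.
move=> r0.
pose B i j := \bigcup_(t < 2 ^ j + 2)
  ball ((iter i doubling x + t%:R - 1) / 2 ^+ j) (r / 2 ^+ j).
have B_le i j : (lam (B i j) <= (6 * r)%:E)%E.
  have pow2_gt0 : 0 < (2 : R) ^+ j by apply: exprn_gt0.
  apply: (le_trans (outer_measure_bigcup_ord_le lam_outer _ _ ((r / 2 ^+ j) *+ 2) _)).
    by move=> t _; rewrite -[X in (X <= _)%E]/(lam _) lebesgue_measure_ball // divr_ge0 // ltW.
  have pow2_divK : 2 ^+ j * (r / 2 ^+ j) = r by rewrite mulrCA mulfV ?gt_eqF ?mulr1.
  have r_div_le : r / 2 ^+ j <= r.
    by rewrite ler_pdivrMr //; apply: ler_peMr; [exact: ltW | apply: exprn_ege1; lra].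
  rewrite lee_fin natrD natrX mulr2n; nra.
apply: (@le_trans _ _ (lam (\bigcup_(i < n) \bigcup_(j < n) B i j))).
  apply: (le_outer_measure lam_outer) => y; rewrite /xsection /= in_setE.
  move=> [_ [hy [i [j [hi [hj hij]]]]]]; rewrite in_itv /= in hy.
  by exists i => //; exists j => //; apply: iter_doubling_near.
apply: (le_trans (outer_measure_bigcup_ord_le lam_outer _ _ (n%:R * (6 * r)) _)).
  by move=> i _; apply: (outer_measure_bigcup_ord_le lam_outer) => j _; exact: B_le.
by rewrite le_eqVlt; apply/orP; left; apply/eqP; congr (_%:E); ring.
Qed.

Lemma lebesgue_xsection_liminf_Eset_doubling (r : nat -> R) x :
  (forall n, 0 < r n) -> (fun n : nat => n%:R ^+ 2 * r n) @ \oo --> 0 ->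
  lam (xsection (set_liminf (fun n => Eset doubling n (r n))) x) = 0%E.
Proof.
move=> r_gt0 r0; rewrite xsection_liminf.
apply: (outer_measure_liminf_null lam_outer _ (fun n => 6 * (n%:R ^+ 2 * r n))).
  by rewrite -(mulr0 6); apply: cvgM => //; exact: cvg_cst.
by move=> n; exact: lebesgue_xsection_Eset_doubling_le.
Qed.

End lebesgue_doubling.

Theorem mainTheorem6 (R : realType) (r : nat -> R)
  (hpos : forall n, 0 < r n)
  (hlim : (fun n : nat => n%:R ^+ 2 * r n : R) @ \oo --> 0) :
  ((@lebesgue_measure R \x @lebesgue_measure R)
     (set_liminf (fun n => Eset doubling n (r n))) = 0)%E.
Proof.
rewrite /product_measure1 (_ : (fun x => _) = cst 0%E) ?integral0//.
by apply/funext => x; exact: lebesgue_xsection_liminf_Eset_doubling.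
Qed.
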